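(* For every $n\ge1$, $$\hat B_{n+1}(x)=(n+1+x+nx^2)\,\hat B_n(x)+(1-x)(1+x^2)\,\hat B_n'(x).$$
   Context: $\mathcal B_n$ is the set of signed permutations (bijections $\sigma$ of $\{\pm1,\dots,\pm n\}$ with $\sigma(-i)=-\sigma(i)$), written as words $\sigma(1)\cdots\sigma(n)$ with $\sigma(0)=0$. An index $i\in\{0\}\cup[n-1]$ is an alternating descent of $\sigma$ if either $\sigma(i)<\sigma(i+1)$ and $i$ is even, or $\sigma(i)>\sigma(i+1)$ and $i$ is odd; $\hat B_n(x)=\sum_{\sigma\in\mathcal B_n}x^{\hat d_B(\sigma)}$ with $\hat d_B(\sigma)$ the number of alternating descents. *)

From HB Require Import structures.
From mathcomp Require Import all_boot all_order all_algebra all_fingroup.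
Set Implicit Arguments. Unset Strict Implicit. Unset Printing Implicit Defensive.
Import Order.TTheory GRing.Theory Num.Theory.
Local Open Scope ring_scope.

(* A signed permutation of {±1,…,±n} is encoded as a pair (p, s) with
   p : {perm 'I_n} and s : {ffun 'I_n -> bool}; it is the bijection
   sigma(k+1) = (-1)^(s k) * (p k + 1), extended by sigma(-i) = -sigma(i).
   This is a bijection between this finite type and B_n. *)
Definition signed_perm (n : nat) := ({perm 'I_n} * {ffun 'I_n -> bool})%type.

(* sigma(j) for j in {0,…,n}, with sigma(0) = 0 (entries beyond n are
   irrelevant and set to 0). *)
Definition sval_at (n : nat) (sg : signed_perm n) (j : nat) : int :=
  match j with
  | 0 => 0
  | k.+1 =>
      match insub k : option 'I_n with
      | Some i => (-1) ^+ (sg.2 i) * ((sg.1 i : nat).+1)%:Z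
      | None => 0
      end
  end.

Definition is_alt_descent (n : nat) (sg : signed_perm n) (i : nat) : bool :=
  ((sval_at sg i < sval_at sg i.+1) && ~~ odd i)
  || ((sval_at sg i > sval_at sg i.+1) && odd i).

Definition alt_des_B (n : nat) (sg : signed_perm n) : nat :=
  \sum_(0 <= i < n) is_alt_descent sg i.

Definition Bhat (n : nat) : {poly int} :=
  \sum_(sg : signed_perm n) 'X^(alt_des_B sg).

(* Identify a signed permutation with its word sigma(1) ... sigma(n).  Every
   signed word of length n+1 arises exactly once from a signed word w of length n
   by inserting n+1 or -(n+1) at a position j <= n and negating the letters of w
   after position j.  Negating the suffix reverses all its comparisons while the
   insertion shifts their parities by one, so the alternating descents inside the
   suffix survive; only the steps next to the new extreme letter change.  If w has
   d alternating descents and c_j records whether j is one of them, the two signs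
   give d - c_j and d - c_j + 2 descents for j < n, and d and d + 1 for j = n.
   As the c_j sum to d, w contributes
   (1 + x^2) ((n - d) x^d + d x^(d-1)) + x^d (1 + x),
   which is the right-hand side of the recurrence evaluated on x^d. *)

From mathcomp Require Import all_boot all_order all_algebra all_fingroup ring zify.
Import Order.TTheory GRing.Theory Num.Theory.
Local Open Scope ring_scope.
Set Implicit Arguments. Unset Strict Implicit. Unset Printing Implicit Defensive.

Definition alt_step (p x : int) (odd_pos : bool) : bool :=
  ((p < x) && ~~ odd_pos) || ((x < p) && odd_pos).

(* [alt_des p b w] counts the alternating descents of the word [p :: w],
   the first position having parity [b]. *)
Fixpoint alt_des (p : int) (b : bool) (w : seq int) : nat :=
  if w is x :: w' then (alt_step p x b + alt_des x (~~ b) w')%N else 0%N.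

Lemma alt_des_cons p b x w :
  alt_des p b (x :: w) = (alt_step p x b + alt_des x (~~ b) w)%N.
Proof. by []. Qed.

Lemma alt_des_cat p b s1 s2 :
  alt_des p b (s1 ++ s2) = (alt_des p b s1 + alt_des (last p s1) (b (+) odd (size s1)) s2)%N.
Proof.
elim: s1 p b => [|x s1 IH] p b /=; first by rewrite addbF.
by rewrite IH addnA addNb addbN.
Qed.

Lemma alt_des_opp p b s : alt_des (- p) b (map -%R s) = alt_des p (~~ b) s.
Proof.
elim: s p b => [|x s IH] p b //=.
by rewrite IH negbK /alt_step !ltrN2 negbK orbC.
Qed.

Lemma last_take (T : Type) (x0 : T) s i : (i <= size s)%N ->
  last x0 (take i s) = nth x0 (x0 :: s) i.
Proof.
by move=> le_is; rewrite (last_nth x0) size_takel // -[x0 :: _]/(take i.+1 (x0 :: s)) nth_take.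
Qed.

Lemma alt_des_sum w : alt_des 0 false w =
  (\sum_(0 <= j < size w) alt_step (last 0%R (take j w)) (nth 0%R w j) (odd j))%N.
Proof.
elim/last_ind: w => [|s x IH]; first by rewrite big_geq.
rewrite -cats1 alt_des_cat /= size_cat /= addn1 big_nat_recr //= IH addn0.
congr (_ + _)%N; last by rewrite take_size_cat // nth_cat ltnn subnn.
apply: eq_big_nat => j /andP [_ lt_js].
by rewrite takel_cat ?(ltnW lt_js) // nth_cat lt_js.
Qed.

Lemma alt_des_split p b w j : (j < size w)%N ->
  alt_des p b w = (alt_des p b (take j w)
    + alt_step (last p (take j w)) (nth 0%R w j) (b (+) odd j)
    + alt_des (nth 0%R w j) (~~ (b (+) odd j)) (drop j.+1 w))%N.
Proof.
move=> lt_jw; rewrite -{1}(cat_take_drop j w) alt_des_cat (drop_nth 0 lt_jw).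
by rewrite size_takel 1?ltnW // -addnA.
Qed.

Section AltStepExtreme.
Variables (a : int) (v : nat) (b : bool).
Hypothesis lt_av : (absz a < v)%N.

Lemma alt_step_to_max : alt_step a (Posz v) b = ~~ b.
Proof. have lt : a < Posz v by lia. by rewrite /alt_step lt ltNge (ltW lt); case: b. Qed.

Lemma alt_step_to_min : alt_step a (- Posz v) b = b.
Proof. have lt : - Posz v < a by lia. by rewrite /alt_step lt ltNge (ltW lt); case: b. Qed.

Lemma alt_step_from_max : alt_step (Posz v) a b = b.
Proof. have lt : a < Posz v by lia. by rewrite /alt_step lt ltNge (ltW lt); case: b. Qed.

Lemma alt_step_from_min : alt_step (- Posz v) a b = ~~ b.
Proof. have lt : - Posz v < a by lia. by rewrite /alt_step lt ltNge (ltW lt); case: b. Qed.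

End AltStepExtreme.

Definition insert_max (w : seq int) (j : nat) (pos : bool) : seq int :=
  let v := Posz (size w).+1 in
  take j w ++ (if pos then v else - v) :: map -%R (drop j w).

Section InsertMax.
Variable w : seq int.
Hypothesis w_bounded : {in w, forall z, (absz z <= size w)%N}.

Lemma abs_last_take_lt j : (absz (last 0%R (take j w)) < (size w).+1)%N.
Proof.
have : last 0 (take j w) \in 0 :: take j w by apply: mem_last.
by rewrite inE => /predU1P [-> //|/mem_take/w_bounded].
Qed.

Lemma alt_des_insert_max_inner j e : (j < size w)%N ->
  alt_des 0 false (insert_max w j e) =
  (alt_des 0 false w - alt_step (last 0%R (take j w)) (nth 0%R w j) (odd j) + (e (+) odd j).*2)%N.
Proof.
move=> lt_jw.
have abs_wj : (absz (nth 0%R w j) < (size w).+1)%N by apply/w_bounded/mem_nth.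
have abs_last := abs_last_take_lt j.
rewrite /insert_max (drop_nth 0 lt_jw) alt_des_cat.
rewrite size_takel ?(ltnW lt_jw) // map_cons !alt_des_cons alt_des_opp negbK.
rewrite (alt_des_split 0 false lt_jw) addFb.
case: e; rewrite ?(alt_step_to_max, alt_step_from_max, alt_step_to_min, alt_step_from_min) ?abszN //;
  by case: (odd j) => /=; lia.
Qed.

Lemma alt_des_insert_max_last e :
  alt_des 0 false (insert_max w (size w) e) = (alt_des 0 false w + (e (+) odd (size w)))%N.
Proof.
have := abs_last_take_lt (size w); rewrite take_size => abs_last.
rewrite /insert_max take_size drop_size alt_des_cat alt_des_cons addFb /= addn0.
by case: e; rewrite ?alt_step_to_max ?alt_step_to_min.
Qed.

Lemma sum_signs_insert_max_inner j : (j < size w)%N ->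
  \sum_(e <- [:: true; false]) ('X^(alt_des 0 false (insert_max w j e)) : {poly int}) =
  'X^(alt_des 0 false w - alt_step (last 0 (take j w)) (nth 0 w j) (odd j)) * (1 + 'X^2).
Proof.
move=> lt_jw; rewrite !big_cons big_nil addr0 !alt_des_insert_max_inner // !exprD.
by case: (odd j); rewrite /= -[1.*2]/2%N double0 expr0 mulrDr mulr1 // addrC.
Qed.

Lemma sum_signs_insert_max_last :
  \sum_(e <- [:: true; false]) ('X^(alt_des 0 false (insert_max w (size w) e)) : {poly int}) =
  'X^(alt_des 0 false w) * (1 + 'X).
Proof.
rewrite !big_cons big_nil addr0 !alt_des_insert_max_last // !exprD.
by case: (odd (size w)) => /=; rewrite expr0 expr1 mulrDr mulr1 // addrC.
Qed.

End InsertMax.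

Definition signed_word (n : nat) (w : seq int) : bool := perm_eq (map absz w) (iota 1 n).

Lemma size_signed_word n w : signed_word n w -> size w = n.
Proof. by move/perm_size; rewrite size_map size_iota. Qed.

Lemma signed_word_abs n w z : signed_word n w -> z \in w -> (0 < absz z <= n)%N.
Proof.
move=> sw_w z_w; have : absz z \in iota 1 n by rewrite -(perm_mem sw_w) map_f.
by rewrite mem_iota; lia.
Qed.

Lemma map_absz_opp (s : seq int) : map absz (map -%R s) = map absz s.
Proof. by rewrite -map_comp; apply: eq_map => x /=; rewrite abszN. Qed.

Lemma map_absz_insert_max w j e :
  map absz (insert_max w j e) = take j (map absz w) ++ (size w).+1 :: drop j (map absz w).
Proof. by rewrite /insert_max map_cat map_cons map_absz_opp map_take map_drop; case: e. Qed.

Lemma perm_iota_last n : perm_eq (iota 1 n.+1) (n.+1 :: iota 1 n).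
Proof. by move: (iotaD 1 n 1); rewrite addn1 add1n => ->; rewrite perm_catC. Qed.

Lemma perm_eq_iota_last n s1 s2 :
  perm_eq (s1 ++ n.+1 :: s2) (iota 1 n.+1) = perm_eq (s1 ++ s2) (iota 1 n).
Proof. by rewrite (perm_catCA _ [:: _]) (permPr (perm_iota_last n)) perm_cons. Qed.

Lemma signed_word_insert_max n w j e : signed_word n w -> signed_word n.+1 (insert_max w j e).
Proof.
move=> sw_w; rewrite /signed_word map_absz_insert_max (size_signed_word sw_w).
by rewrite perm_eq_iota_last cat_take_drop.
Qed.

Lemma index_insert_max n w j e : signed_word n w -> (j <= n)%N ->
  index n.+1 (map absz (insert_max w j e)) = j.
Proof.
move=> sw_w le_jn; have size_w := size_signed_word sw_w.
rewrite map_absz_insert_max size_w index_cat size_takel ?size_map ?size_w //.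
have -> : (n.+1 \in take j (map absz w)) = false.
  apply/negbTE/negP => /mem_take /mapP [z z_w z_max].
  by have := signed_word_abs sw_w z_w; lia.
by rewrite /= eqxx addn0.
Qed.

Lemma insert_max_inj n w1 w2 j1 j2 e1 e2 :
  signed_word n w1 -> signed_word n w2 -> (j1 <= n)%N -> (j2 <= n)%N ->
  insert_max w1 j1 e1 = insert_max w2 j2 e2 -> [/\ w1 = w2, j1 = j2 & e1 = e2].
Proof.
move=> sw1 sw2 le_j1n le_j2n E.
have ej : j1 = j2 by rewrite -(index_insert_max e1 sw1 le_j1n) E index_insert_max.
subst j2; move: E; rewrite /insert_max (size_signed_word sw1) (size_signed_word sw2).
move/eqP; rewrite eqseq_cat; last first.
  by rewrite !size_takel ?(size_signed_word sw1) ?(size_signed_word sw2).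
case/andP => /eqP e_take /eqP [e_max /(inj_map (@oppr_inj _)) e_drop].
split => //; last by move: e_max; case: e1; case: e2.
by rewrite -(cat_take_drop j1 w1) e_take e_drop cat_take_drop.
Qed.

Lemma signed_word_split n w : signed_word n.+1 w ->
  exists w' j e, [/\ signed_word n w', (j <= n)%N & w = insert_max w' j e].
Proof.
move=> sw_w; set j := index n.+1 (map absz w).
have max_in : n.+1 \in map absz w by rewrite (perm_mem sw_w) mem_iota; lia.
have lt_jw : (j < size w)%N by rewrite -(size_map absz) index_mem.
have abs_wj : absz (nth 0 w j) = n.+1 by rewrite -(nth_map _ 0%N) // nth_index.
have split_abs : map absz w = take j (map absz w) ++ n.+1 :: drop j.+1 (map absz w).
  by rewrite -(nth_index 0%N max_in) -drop_nth ?index_mem // cat_take_drop.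
set w' := take j w ++ map -%R (drop j.+1 w).
have sw' : signed_word n w'.
  move: sw_w; rewrite /signed_word split_abs perm_eq_iota_last.
  by rewrite /w' map_cat map_absz_opp map_take map_drop.
exists w', j, (0 < nth 0 w j); split => //.
  by rewrite -ltnS -(size_signed_word sw_w).
rewrite /insert_max (size_signed_word sw') take_size_cat ?size_takel 1?ltnW //.
have -> : (if 0 < nth 0 w j then Posz n.+1 else - Posz n.+1) = nth 0 w j by case: ifP; lia.
by rewrite drop_size_cat ?size_takel 1?ltnW // (mapK opprK) -drop_nth // cat_take_drop.
Qed.

Fixpoint signed_words (n : nat) : seq (seq int) :=
  if n is m.+1 then
    [seq insert_max wj.1 wj.2 e
       | wj <- [seq (w, j) | w <- signed_words m, j <- iota 0 m.+1], e <- [:: true; false]]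
  else [:: [::]].

Lemma signed_words_succ n :
  signed_words n.+1 =
  [seq insert_max wj.1 wj.2 e
     | wj <- [seq (w, j) | w <- signed_words n, j <- iota 0 n.+1], e <- [:: true; false]].
Proof. by []. Qed.

Lemma mem_allpairs_pair (S T : eqType) (s : seq S) (t : seq T) x y :
  ((x, y) \in [seq (a, b) | a <- s, b <- t]) = (x \in s) && (y \in t).
Proof.
apply/allpairsP/andP => [[[a b] /= [a_s b_t [-> ->]]] // | [x_s y_t]].
by exists (x, y).
Qed.

Lemma mem_signed_words n w : (w \in signed_words n) = signed_word n w.
Proof.
elim: n w => [|m IH] w.
  by apply/idP/idP => [/[!inE]/eqP -> // | /size_signed_word/size0nil ->].
rewrite signed_words_succ.
apply/allpairsP/idP => [[[[w' j] e] [+ _ ->]] | ].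
  by rewrite mem_allpairs_pair IH => /andP [sw' _]; apply: signed_word_insert_max.
case/signed_word_split => w' [j [e [sw' le_jm ->]]].
exists ((w', j), e); split => //; last by case: e.
by rewrite mem_allpairs_pair IH mem_iota sw' /=; lia.
Qed.

Lemma uniq_signed_words n : uniq (signed_words n).
Proof.
elim: n => [|m IH] //; rewrite signed_words_succ.
apply: allpairs_uniq => //.
  by apply: allpairs_uniq => //; [exact: iota_uniq | move=> [? ?] [? ?]].
move=> [[w1 j1] e1] [[w2 j2] e2].
rewrite !mem_allpairs_pair !mem_signed_words !mem_iota.
move=> /andP[/andP[sw1 j1_le] _] /andP[/andP[sw2 j2_le] _] E.
by case: (insert_max_inj sw1 sw2 j1_le j2_le E) => -> -> ->.
Qed.

Lemma big_signed_words_succ (R : Type) (idx : R) (op : Monoid.law idx) n (F : seq int -> R) :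
  \big[op/idx]_(w <- signed_words n.+1) F w =
  \big[op/idx]_(w <- signed_words n) \big[op/idx]_(j <- iota 0 n.+1)
     \big[op/idx]_(e <- [:: true; false]) F (insert_max w j e).
Proof. by rewrite signed_words_succ !big_allpairs_dep. Qed.

Definition signed_perm_word n (sg : signed_perm n) : seq int :=
  [seq sval_at sg i.+1 | i <- iota 0 n].

Lemma sval_at_ord n (sg : signed_perm n) (i : 'I_n) :
  sval_at sg (i : nat).+1 = (-1) ^+ (sg.2 i) * ((sg.1 i : nat).+1)%:Z.
Proof. by rewrite /sval_at valK. Qed.

Lemma size_signed_perm_word n (sg : signed_perm n) : size (signed_perm_word sg) = n.
Proof. by rewrite size_map size_iota. Qed.

Lemma nth_signed_perm_word n (sg : signed_perm n) i : (i < n)%N ->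
  nth 0 (signed_perm_word sg) i = sval_at sg i.+1.
Proof. by move=> lt_in; rewrite (nth_map 0%N) ?size_iota // nth_iota. Qed.

Lemma signed_perm_word_inj n : injective (@signed_perm_word n).
Proof.
move=> [p1 s1] [p2 s2] E.
have same_at i : p1 i = p2 i /\ s1 i = s2 i.
  move: (congr1 (nth 0 ^~ i) E).
  rewrite !nth_signed_perm_word // !sval_at_ord /=.
  by case: (s1 i); case: (s2 i); rewrite ?expr0 ?expr1 ?mul1r ?mulN1r => eq_i;
    split => //; try apply: ord_inj; lia.
congr pair; first by apply/permP => i; case: (same_at i).
by apply/ffunP => i; case: (same_at i).
Qed.

Lemma perm_map_enum (T : finType) (p : {perm T}) : perm_eq (map p (enum T)) (enum T).
Proof.
apply: uniq_perm; [by rewrite map_inj_uniq ?enum_uniq //; exact: perm_inj | exact: enum_uniq |].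
by move=> x; rewrite mem_enum; apply/mapP; exists ((p^-1)%g x); rewrite ?mem_enum ?permKV.
Qed.

Lemma signed_word_signed_perm_word n (sg : signed_perm n) : signed_word n (signed_perm_word sg).
Proof.
have iota_ord : iota 1 n = [seq (val i).+1 | i <- enum 'I_n].
  by rewrite (map_comp (addn 1) val) val_enum_ord -(iotaDl 1 0).
rewrite /signed_word /signed_perm_word iota_ord -val_enum_ord -!map_comp.
rewrite (eq_map (g := (fun i : 'I_n => (val i).+1) \o sg.1)); last first.
  by move=> i /=; rewrite valK abszMsign.
rewrite map_comp; apply: perm_map; rewrite -enumT; exact: perm_map_enum.
Qed.

Lemma signed_wordP n w : signed_word n w -> exists sg : signed_perm n, w = signed_perm_word sg.
Proof.
move=> sw_w; have size_w := size_signed_word sw_w.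
have abs_uniq : uniq (map absz w) by rewrite (perm_uniq sw_w) iota_uniq.
have abs_nth (i : 'I_n) : (0 < absz (nth 0%R w i) <= n)%N.
  by apply: (signed_word_abs sw_w); rewrite mem_nth ?size_w.
pose f (i : 'I_n) : 'I_n := insubd i (absz (nth 0 w i)).-1.
have val_f i : val (f i) = (absz (nth 0 w i)).-1.
  by rewrite val_insubd; case: ifP => // /negP; have := abs_nth i; lia.
have f_inj : injective f.
  move=> i k /(congr1 val); rewrite !val_f => eq_ik; apply/ord_inj/eqP.
  rewrite -(nth_uniq 0%N _ _ abs_uniq) ?size_map ?size_w // !(nth_map 0%R) ?size_w //.
  by have := abs_nth i; have := abs_nth k; lia.
exists (perm f_inj, [ffun i : 'I_n => nth 0 w i < 0]).
apply: (@eq_from_nth _ 0) => [|i]; first by rewrite size_signed_perm_word.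
rewrite size_w => lt_in.
rewrite nth_signed_perm_word // -[i.+1]/((Ordinal lt_in : nat).+1) sval_at_ord.
rewrite permE ffunE val_f /= prednK ?mulz_sign_abs //.
by case/andP: (abs_nth (Ordinal lt_in)).
Qed.

Lemma alt_des_B_word n (sg : signed_perm n) : alt_des_B sg = alt_des 0 false (signed_perm_word sg).
Proof.
rewrite alt_des_sum size_signed_perm_word /alt_des_B.
apply: eq_big_nat => i /andP [_ lt_in].
rewrite last_take ?size_signed_perm_word 1?ltnW // nth_signed_perm_word //.
by case: i lt_in => [|i] lt_in //=; rewrite nth_signed_perm_word // ltnW.
Qed.

Lemma Bhat_signed_words n : Bhat n = \sum_(w <- signed_words n) 'X^(alt_des 0 false w).
Proof.
rewrite /Bhat (eq_bigr (fun sg => 'X^(alt_des 0 false (signed_perm_word sg)))); last first.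
  by move=> sg _; rewrite alt_des_B_word.
rewrite -(big_map (@signed_perm_word n) predT (fun w => 'X^(alt_des 0 false w))).
apply/perm_big/uniq_perm; first by rewrite map_inj_uniq ?index_enum_uniq //; exact: signed_perm_word_inj.
  exact: uniq_signed_words.
move=> w; rewrite mem_signed_words; apply/mapP/idP => [[sg _ ->] | /signed_wordP [sg ->]].
  exact: signed_word_signed_perm_word.
by exists sg; rewrite ?mem_index_enum.
Qed.

Lemma sum_expr_sub_bool (R : pzSemiRingType) (x : R) (D : nat) (T : Type) (c : pred T) s :
  \sum_(j <- s) x ^+ (D - c j) = x ^+ D *+ count (predC c) s + x ^+ D.-1 *+ count c s.
Proof.
elim: s => [|j s IH]; first by rewrite big_nil !mulr0n addr0.
rewrite big_cons IH /=; case: (c j); rewrite /= ?subn1 ?subn0 mulrS.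
- by rewrite addrCA.
- by rewrite addrA.
Qed.

Lemma recurrence_on_monomial (R : comNzRingType) (n d : nat) : (d <= n)%N ->
  ('X^d *+ (n - d) + 'X^(d.-1) *+ d) * (1 + 'X^2) + 'X^d * (1 + 'X) =
  ((n.+1)%:R + 'X + n%:R *: 'X^2) * 'X^d + (1 - 'X) * (1 + 'X^2) * ('X^d)^`() :> {poly R}.
Proof.
move=> le_dn; rewrite derivXn mulrnBr // -mul_polyC polyC_natr.
case: d le_dn => [|d] _; first by rewrite !mulr0n; ring.
rewrite exprS /=; ring.
Qed.

Lemma sum_insert_max_signed_word n w : signed_word n w ->
  \sum_(j <- iota 0 n.+1) \sum_(e <- [:: true; false])
     ('X^(alt_des 0 false (insert_max w j e)) : {poly int}) =
  ((n.+1)%:R + 'X + n%:R *: 'X^2) * 'X^(alt_des 0 false w)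
  + (1 - 'X) * (1 + 'X^2) * ('X^(alt_des 0 false w))^`().
Proof.
move=> sw_w; rewrite -(size_signed_word sw_w).
have w_bounded : {in w, forall z, (absz z <= size w)%N}.
  by move=> z /(signed_word_abs sw_w); rewrite -(size_signed_word sw_w) => /andP [].
set d := alt_des 0 false w.
pose c j := alt_step (last 0 (take j w)) (nth 0 w j) (odd j).
have count_c : count c (index_iota 0 (size w)) = d.
  by rewrite /d alt_des_sum -sumn_count sumnE big_map.
have count_not_c : count (predC c) (index_iota 0 (size w)) = (size w - d)%N.
  by have := count_predC c (index_iota 0 (size w)); rewrite count_c size_iota; lia.
have le_dw : (d <= size w)%N.
  by have := count_size c (index_iota 0 (size w)); rewrite count_c size_iota subn0.
rewrite -(recurrence_on_monomial _ le_dw) -[iota 0 _]/(index_iota 0 (size w).+1).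
rewrite big_nat_recr //= sum_signs_insert_max_last //.
rewrite (eq_big_nat _ _ (F2 := fun j => 'X^(d - c j) * (1 + 'X^2))); last first.
  by move=> j /andP [_ lt_jw]; exact: sum_signs_insert_max_inner.
by rewrite -big_distrl sum_expr_sub_bool count_c count_not_c.
Qed.

Theorem mainTheorem10 (n : nat) : (1 <= n)%N ->
  Bhat n.+1 =
    ((n.+1)%:R + 'X + n%:R *: 'X^2) * Bhat n
    + (1 - 'X) * (1 + 'X^2) * (Bhat n)^`().
Proof.
(* The recurrence also holds for n = 0. *)
move=> _.
rewrite !Bhat_signed_words big_signed_words_succ raddf_sum !mulr_sumr -big_split /=.
rewrite big_seq [RHS]big_seq; apply: eq_bigr => w.
by rewrite mem_signed_words => /sum_insert_max_signed_word.
Qed.
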